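(* Let $d_1\leq d_2$ and let $X$ be a positive semidefinite matrix in $\mathcal{M}_{d_1}\otimes\mathcal{M}_{d_2}$, written as $X=\sum_{i,j=1}^{d_1}\ket{i}\bra{j}\otimes X_{ij}$ with blocks $X_{ij}\in\mathcal{M}_{d_2}$. If $\mathrm{SN}(X)=k\geq 2$, then there exist distinct indices $m_1,\ldots,m_{d_1-k+2}\in\{1,\ldots,d_1\}$ such that the principal sub-block matrix \[ Y=\sum_{s,t=1}^{d_1-k+2}\ket{s}\bra{t}\otimes X_{m_sm_t}\in\mathcal{M}_{d_1-k+2}\otimes\mathcal{M}_{d_2} \] (which is positive semidefinite) is entangled.
   Context: $\mathcal{M}_d$: complex $d\times d$ matrices. A positive semidefinite $W\in\mathcal{M}_{a}\otimes\mathcal{M}_{b}$ is separable if it is a finite sum $\sum_i P_i\otimes Q_i$ with $P_i,Q_i$ positive semidefinite, and entangled otherwise. The Schmidt rank of $\ket{\psi}\in\mathbb{C}^{a}\otimes\mathbb{C}^{b}$ is the rank of $\mathrm{tr}_A\ket{\psi}\bra{\psi}$; for a nonzero positive semidefinite $W$, $\mathrm{SN}(W)$ is the minimum over decompositions $W=\sum_ip_i\ket{\psi_i}\bra{\psi_i}$ ($p_i>0$) of the maximal Schmidt rank of the $\ket{\psi_i}$. *)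

(* Complex numbers are R[i] (mathcomp-real-closed's complex)
   over an arbitrary R : realType (i.e. a model of the real numbers), tensor
   products are mathcomp-real-closed's Kronecker product [tensmx]
   (index convention (i,k) |-> i * d2 + k, first factor outer). *)
From mathcomp Require Import all_boot all_algebra.
From mathcomp Require Import reals.
From mathcomp Require Export complex mxtens.
Set Implicit Arguments. Unset Strict Implicit. Unset Printing Implicit Defensive.
Import GRing.Theory Num.Theory.
Local Open Scope ring_scope.

Section QDefs.
Variable C : numClosedFieldType.

Definition adjmx (m n : nat) (A : 'M[C]_(m, n)) : 'M[C]_(n, m) :=
  (map_mx Num.conj A)^T.

Definition psd (n : nat) (A : 'M[C]_n) : Prop :=
  adjmx A = A /\ forall v : 'cV[C]_n, 0 <= (adjmx v *m A *m v) 0 0.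

Definition separable (a b : nat) (W : 'M[C]_(a * b)) : Prop :=
  psd W /\
  exists s : seq ('M[C]_a * 'M[C]_b),
    (forall PQ, PQ \in s -> psd PQ.1 /\ psd PQ.2) /\
    W = \sum_(PQ <- s) tensmx PQ.1 PQ.2.

Definition entangled (a b : nat) (W : 'M[C]_(a * b)) : Prop :=
  psd W /\ ~ separable W.

Definition ptraceA (a b : nat) (W : 'M[C]_(a * b)) : 'M[C]_b :=
  \matrix_(k, l) \sum_(i < a) W (mxtens_index (i, k)) (mxtens_index (i, l)).

Definition schmidt_rank (a b : nat) (psi : 'cV[C]_(a * b)) : nat :=
  \rank (ptraceA (psi *m adjmx psi)).

Definition pure_decomp (a b : nat) (W : 'M[C]_(a * b))
    (s : seq (C * 'cV[C]_(a * b))) : Prop :=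
  (forall x, x \in s -> 0 < x.1) /\
  W = \sum_(x <- s) x.1 *: (x.2 *m adjmx x.2).

Definition SN_le (a b : nat) (W : 'M[C]_(a * b)) (k : nat) : Prop :=
  exists s, pure_decomp W s /\ forall x, x \in s -> (schmidt_rank x.2 <= k)%N.

Definition schmidt_number_is (a b : nat) (W : 'M[C]_(a * b)) (k : nat) : Prop :=
  SN_le W k /\ forall j, SN_le W j -> (k <= j)%N.

(* principal sub-block matrix sum_{s,t} |s><t| (x) X_{m_s m_t} *)
Definition subblock (d1 d2 n : nat) (X : 'M[C]_(d1 * d2)) (m : 'I_n -> 'I_d1)
  : 'M[C]_(n * d2) :=
  \matrix_(p, q)
    X (mxtens_index (m (mxtens_unindex p).1, (mxtens_unindex p).2))
      (mxtens_index (m (mxtens_unindex q).1, (mxtens_unindex q).2)).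

End QDefs.

From mathcomp Require Import all_boot all_algebra.
From mathcomp Require Import reals complex mxtens sesquilinear spectral order.
From mathcomp Require Import zify.
From Stdlib Require Import Classical_Prop.
Set Implicit Arguments. Unset Strict Implicit. Unset Printing Implicit Defensive.

(* Write a psd Y on C^(n+1) (x) C^b in block form [[A, B], [B^*, D]], where
   A is the principal sub-block on the first n blocks.  Positivity gives
   B = A S, and then Y = T A T^* + Q (D - S^* A S) Q^* with T = P + Q S^*,
   P and Q the block embeddings, and the Schur complement D - S^* A S psd.
   Since T x = P x + Q (S^* x) and Q only produces product vectors, pushing a
   decomposition of A through T raises every Schmidt rank by at most one:
   SN(Y) <= SN(A) + 1.  If every principal sub-block of X on d1 - k + 2
   indices were separable, adding the k - 2 remaining indices one at a time
   would give SN(X) <= k - 1. *)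

Import Order.TTheory GRing.Theory Num.Theory.
Local Open Scope ring_scope.

Section Adjoint.
Variable C : numClosedFieldType.
Implicit Types m n p q : nat.

Lemma adjmxK m n (A : 'M[C]_(m, n)) : adjmx (adjmx A) = A.
Proof. by apply/matrixP => i j; rewrite !mxE conjCK. Qed.

Lemma adjmx0 m n : adjmx (0 : 'M[C]_(m, n)) = 0.
Proof. by apply/matrixP => i j; rewrite !mxE rmorph0. Qed.

Lemma adjmxD m n (A B : 'M[C]_(m, n)) : adjmx (A + B) = adjmx A + adjmx B.
Proof. by apply/matrixP => i j; rewrite !mxE rmorphD. Qed.

Lemma adjmxN m n (A : 'M[C]_(m, n)) : adjmx (- A) = - adjmx A.
Proof. by apply/matrixP => i j; rewrite !mxE rmorphN. Qed.

Lemma adjmxB m n (A B : 'M[C]_(m, n)) : adjmx (A - B) = adjmx A - adjmx B.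
Proof. by rewrite adjmxD adjmxN. Qed.

Lemma adjmxM m n p (A : 'M[C]_(m, n)) (B : 'M[C]_(n, p)) :
  adjmx (A *m B) = adjmx B *m adjmx A.
Proof. by rewrite /adjmx map_mxM trmx_mul. Qed.

Lemma map_conj_adjmx m n (A : 'M[C]_(m, n)) : map_mx Num.conj (adjmx A) = A^T.
Proof. by apply/matrixP => i j; rewrite !mxE conjCK. Qed.

Lemma adjmx_delta m n i j : adjmx (delta_mx i j : 'M[C]_(m, n)) = delta_mx j i.
Proof. by apply/matrixP => a b; rewrite !mxE andbC rmorph_nat. Qed.

Lemma adjmx1 n : adjmx (1%:M : 'M[C]_n) = 1%:M.
Proof. by rewrite /adjmx map_mx1 trmx1. Qed.

Lemma adjmx_tens m n p q (A : 'M[C]_(m, n)) (B : 'M[C]_(p, q)) :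
  adjmx (A *t B) = adjmx A *t adjmx B.
Proof. by rewrite /adjmx map_mxT trmx_tens. Qed.

End Adjoint.

Section PositiveSemidefinite.
Variable C : numClosedFieldType.

Definition outer_decomp n (W : 'M[C]_n) (s : seq (C * 'cV[C]_n)) : Prop :=
  (forall x, x \in s -> 0 < x.1) /\ W = \sum_(x <- s) x.1 *: (x.2 *m adjmx x.2).

Lemma psd_congr m n (Y : 'M[C]_m) (E : 'M[C]_(m, n)) :
  psd Y -> psd (adjmx E *m Y *m E).
Proof.
case=> hermY quadY; split; first by rewrite !adjmxM adjmxK hermY mulmxA.
by move=> v; have := quadY (E *m v); rewrite adjmxM !mulmxA.
Qed.

Lemma psd_outer_decomp n (A : 'M[C]_n) : psd A -> exists s, outer_decomp A s.
Proof.
case=> hermA quadA.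
set U := spectralmx A; set d := spectral_diag A; set V := adjmx U.
have UV1 : U *m V = 1%:M.
  by rewrite /V /adjmx map_trmx; apply/unitarymxP/spectral_unitarymx.
have AE : A = V *m diag_mx d *m adjmx V.
  have /orthomx_spectralP -> : A \is normalmx.
    apply/hermitian_normalmx/sesquiP.
    by rewrite expr0 scale1r -map_trmx -[in LHS]hermA.
  by rewrite invmx_unitary ?spectral_unitarymx // /V adjmxK /adjmx map_trmx.
pose v (i : 'I_n) : 'cV[C]_n := V *m delta_mx i 0.
have d_ge0 i : 0 <= d 0 i.
  have := quadA (v i); rewrite /v AE adjmxM adjmxK adjmx_delta.
  have UVK w : U *m (V *m w) = w by rewrite mulmxA UV1 mul1mx.
  by rewrite -!mulmxA !UVK mulmxA -rowE -colE !mxE eqxx mulr1n.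
exists [seq (d 0 i, v i) | i <- index_enum 'I_n & d 0 i != 0]; split.
  move=> x /mapP[j].
  by rewrite mem_filter => /andP [dj _] ->; rewrite lt_def dj d_ge0.
rewrite big_map big_filter big_rmcond /= => [|i /negPn/eqP ->]; last first.
  by rewrite scale0r.
rewrite AE diag_mx_sum_delta mulmx_sumr mulmx_suml; apply: eq_bigr => i _.
rewrite /v adjmxM adjmx_delta -scalemxAr -scalemxAl !mulmxA.
by rewrite -(mulmxA V) mul_delta_mx.
Qed.

Lemma outer_decomp_mulmx m n (E : 'M[C]_(m, n)) W s :
  outer_decomp W s ->
  outer_decomp (E *m W *m adjmx E) [seq (x.1, E *m x.2) | x <- s].
Proof.
case=> pos ->; split; first by move=> _ /mapP[x xs ->]; apply: pos.
rewrite big_map mulmx_sumr mulmx_suml; apply: eq_bigr => x _ /=.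
by rewrite -scalemxAr -scalemxAl adjmxM !mulmxA.
Qed.

Lemma outer_decomp_cat n (W1 W2 : 'M[C]_n) s1 s2 :
  outer_decomp W1 s1 -> outer_decomp W2 s2 -> outer_decomp (W1 + W2) (s1 ++ s2).
Proof.
case=> pos1 -> [pos2 ->]; split; last by rewrite big_cat.
by move=> x; rewrite mem_cat => /orP [] ?; [apply: pos1 | apply: pos2].
Qed.

Lemma outer_decomp0 n (s : seq (C * 'cV[C]_n)) :
  outer_decomp 0 s -> forall x, x \in s -> x.2 = 0.
Proof.
case=> pos /esym sum0 x xs; apply/matrixP => j z; rewrite ord1 [RHS]mxE.
have /matrixP /(_ j j) := sum0; rewrite summxE big_seq mxE => /eqP.
have outer_jj (y : C * 'cV[C]_n) : (y.2 *m adjmx y.2) j j = y.2 j 0 * (y.2 j 0)^*.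
  by rewrite !mxE big_ord1 !mxE.
rewrite psumr_eq0 => [/allP /(_ x xs)|y ys]; last first.
  by rewrite mxE outer_jj mulr_ge0 ?mul_conjC_ge0 // ltW ?pos.
rewrite xs mxE outer_jj mulf_eq0 (gt_eqF (pos x xs)) /=.
by rewrite mul_conjC_eq0 => /eqP.
Qed.

Lemma psd_mulmx_eq0 n p (Y : 'M[C]_n) (V : 'M[C]_(n, p)) :
  psd Y -> adjmx V *m Y *m V = 0 -> Y *m V = 0.
Proof.
move=> /psd_outer_decomp [s decY] quad0.
have := outer_decomp_mulmx (adjmx V) decY; rewrite adjmxK quad0 => dec0.
case: decY => _ ->; rewrite mulmx_suml big1_seq // => x /andP [_ xs].
rewrite -scalemxAl -mulmxA -[adjmx x.2 *m V]adjmxK adjmxM adjmxK.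
have /= -> := outer_decomp0 dec0 (map_f _ xs).
by rewrite adjmx0 mulmx0 scaler0.
Qed.

Lemma psd_range N N1 N2 (Y : 'M[C]_N) (P : 'M[C]_(N, N1)) (Q : 'M[C]_(N, N2)) :
  psd Y -> exists S, adjmx P *m Y *m Q = adjmx P *m Y *m P *m S.
Proof.
(* Z spans the kernel of A; positivity forces Y P Z = 0, hence B^* Z = 0,
   i.e. the columns of B lie in the column space of A. *)
move=> psdY; have hermY := psdY.1.
set A := adjmx P *m Y *m P; set B := adjmx P *m Y *m Q.
set K := cokermx A^T; set Z := map_mx Num.conj K.
have hermA : adjmx A = A by rewrite !adjmxM adjmxK hermY mulmxA.
have AZ0 : A *m Z = 0.
  have := congr1 (map_mx Num.conj) (mulmx_coker A^T).
  by rewrite map_mxM map_mx0 -map_trmx -[(map_mx _ A)^T]/(adjmx A) hermA.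
have YPZ0 : Y *m (P *m Z) = 0.
  apply: psd_mulmx_eq0 => //.
  have -> : adjmx (P *m Z) *m Y *m (P *m Z) = adjmx Z *m (A *m Z).
    by rewrite adjmxM !mulmxA.
  by rewrite AZ0 mulmx0.
have BtK0 : B^T *m K = 0.
  have -> : B^T *m K = map_mx Num.conj (adjmx B *m Z).
    rewrite map_mxM map_conj_adjmx; congr (_ *m _).
    by rewrite /Z -map_mx_comp map_mx_id //= => x; exact: conjCK.
  by rewrite !adjmxM adjmxK hermY -!mulmxA YPZ0 mulmx0 map_mx0.
have /submxP [D BtE] : (B^T <= A^T)%MS by rewrite submxE BtK0.
by exists D^T; rewrite -[B]trmxK BtE trmx_mul trmxK.
Qed.

End PositiveSemidefinite.

Section Tensor.
Variable C : numClosedFieldType.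
Implicit Types m n p q a b : nat.

Lemma tensmxDl m n p q (A B : 'M[C]_(m, n)) (M : 'M[C]_(p, q)) :
  (A + B) *t M = A *t M + B *t M.
Proof. by apply/matrixP => i j; rewrite !mxE mulrDl. Qed.

Lemma tensmxDr m n p q (A : 'M[C]_(m, n)) (M N : 'M[C]_(p, q)) :
  A *t (M + N) = A *t M + A *t N.
Proof. by apply/matrixP => i j; rewrite !mxE mulrDr. Qed.

Lemma tensmxZl m n p q c (A : 'M[C]_(m, n)) (M : 'M[C]_(p, q)) :
  (c *: A) *t M = c *: (A *t M).
Proof. by apply/matrixP => i j; rewrite !mxE mulrA. Qed.

Lemma tensmxZr m n p q c (A : 'M[C]_(m, n)) (M : 'M[C]_(p, q)) :
  A *t (c *: M) = c *: (A *t M).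
Proof. by apply/matrixP => i j; rewrite !mxE mulrCA. Qed.

Lemma tensmx_suml I m n p q (r : seq I) (F : I -> 'M[C]_(m, n)) (M : 'M[C]_(p, q)) :
  (\sum_(x <- r) F x) *t M = \sum_(x <- r) F x *t M.
Proof. exact: (big_morph (fun A => A *t M) (fun A B => tensmxDl A B M) (tens0mx M)). Qed.

Lemma tensmx_sumr I m n p q (r : seq I) (A : 'M[C]_(m, n)) (F : I -> 'M[C]_(p, q)) :
  A *t (\sum_(x <- r) F x) = \sum_(x <- r) A *t F x.
Proof. exact: (big_morph (fun M => A *t M) (tensmxDr A) (tensmx0 A)). Qed.

Lemma tens1mx1 m n : (1%:M : 'M[C]_m) *t (1%:M : 'M[C]_n) = 1%:M.
Proof.
apply/matrixP => u v.
case: (mxtens_indexP u) => i k; case: (mxtens_indexP v) => j l.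
by rewrite tensmxE !mxE (can_eq (@mxtens_indexK _ _)) xpair_eqE -natrM mulnb.
Qed.

Lemma sum_mxtens a b (F : 'I_(a * b) -> C) :
  \sum_u F u = \sum_(i < a) \sum_(k < b) F (mxtens_index (i, k)).
Proof.
rewrite pair_big /= (reindex (@mxtens_index a b)) /=; first by apply: eq_bigr => -[].
by exists (@mxtens_unindex a b) => u _; rewrite ?mxtens_indexK ?mxtens_unindexK.
Qed.

Definition coef_mx a b (x : 'cV[C]_(a * b)) : 'M[C]_(a, b) :=
  \matrix_(i, k) x (mxtens_index (i, k)) 0.

Lemma coef_mxD a b (x y : 'cV[C]_(a * b)) : coef_mx (x + y) = coef_mx x + coef_mx y.
Proof. by apply/matrixP => i k; rewrite !mxE. Qed.

Lemma coef_mx_tens a b (v : 'cV[C]_a) (w : 'cV[C]_b) : coef_mx (v *t w) = v *m w^T.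
Proof.
apply/matrixP => i k; rewrite !mxE mxtens_indexK big_ord1 mxE /=.
by congr (v _ _ * w _ _); apply: ord1.
Qed.

Lemma coef_mx_tens_mulmx a a' b b' (A : 'M[C]_(a', a)) (B : 'M[C]_(b', b))
    (x : 'cV[C]_(a * b)) :
  coef_mx ((A *t B) *m x) = A *m coef_mx x *m B^T.
Proof.
apply/matrixP => i k; rewrite !mxE sum_mxtens.
under eq_bigr => j _ do under eq_bigr => l _ do rewrite tensmxE.
rewrite exchange_big; apply: eq_bigr => l _; rewrite !mxE mulr_suml.
by apply: eq_bigr => j _; rewrite !mxE mulrAC.
Qed.

Lemma mxrank_coef_tens_maxl a a' b b' (A : 'M[C]_(a', a)) (B : 'M[C]_(b', b))
    (x : 'cV[C]_(a * b)) :
  (\rank (coef_mx ((A *t B) *m x)) <= \rank A)%N.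
Proof. by rewrite coef_mx_tens_mulmx -mulmxA mxrankM_maxl. Qed.

Lemma mxrank_coef_tens_maxr a a' b b' (A : 'M[C]_(a', a)) (B : 'M[C]_(b', b))
    (x : 'cV[C]_(a * b)) :
  (\rank (coef_mx ((A *t B) *m x)) <= \rank (coef_mx x))%N.
Proof. by rewrite coef_mx_tens_mulmx (leq_trans (mxrankM_maxl _ _)) ?mxrankM_maxr. Qed.

Lemma schmidt_rank_le_coef a b (x : 'cV[C]_(a * b)) :
  (schmidt_rank x <= \rank (coef_mx x))%N.
Proof.
rewrite /schmidt_rank.
have -> : ptraceA (x *m adjmx x) = (coef_mx x)^T *m map_mx Num.conj (coef_mx x).
  apply/matrixP => k l; rewrite !mxE; apply: eq_bigr => i _.
  by rewrite !mxE big_ord1 !mxE.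
by rewrite (leq_trans (mxrankM_maxl _ _)) ?mxrank_tr.
Qed.

End Tensor.

Section SchmidtNumber.
Variable C : numClosedFieldType.

Definition SN_coef_le a b (W : 'M[C]_(a * b)) (r : nat) : Prop :=
  exists s, outer_decomp W s /\ forall x, x \in s -> (\rank (coef_mx x.2) <= r)%N.

Lemma SN_coef_le_SN_le a b (W : 'M[C]_(a * b)) r : SN_coef_le W r -> SN_le W r.
Proof.
case=> s [decW rank_s]; exists s; split => // x xs.
exact: leq_trans (schmidt_rank_le_coef _) (rank_s x xs).
Qed.

Lemma SN_coef_le_dim a b (W : 'M[C]_(a * b)) : psd W -> SN_coef_le W a.
Proof.
by move=> /psd_outer_decomp [s decW]; exists s; split => // x _; apply: rank_leq_row.
Qed.

Lemma outer_decomp_tens a b (P : 'M[C]_a) (Q : 'M[C]_b) sP sQ :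
  outer_decomp P sP -> outer_decomp Q sQ ->
  outer_decomp (P *t Q) [seq (x.1 * y.1, x.2 *t y.2) | x <- sP, y <- sQ].
Proof.
case=> posP -> [posQ ->]; split.
  by move=> _ /allpairsP [[x y] /= [xs ys ->]]; rewrite mulr_gt0 ?posP ?posQ.
rewrite big_allpairs_dep tensmx_suml; apply: eq_bigr => x _.
rewrite tensmx_sumr; apply: eq_bigr => y _.
(* The width 1 * 1 of x.2 *t y.2 is 1 only up to conversion, hence the
   explicit instances. *)
by rewrite /= tensmxZl tensmxZr scalerA (adjmx_tens x.2 y.2) -(tensmx_mul x.2 y.2).
Qed.

Lemma separable_SN_coef_le1 a b (W : 'M[C]_(a * b)) : separable W -> SN_coef_le W 1.
Proof.
case=> _ [s [psd_s ->]]; elim: s psd_s => [|[P Q] s IHs] psd_s.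
  by exists [::]; split => //; split => //; rewrite !big_nil.
have [/psd_outer_decomp [sP decP] /psd_outer_decomp [sQ decQ]] := psd_s _ (mem_head _ _).
have [s' [dec' rank_s']] := IHs (fun x xs => psd_s x (mem_behead (s := (P, Q) :: s) xs)).
exists ([seq (x.1 * y.1, x.2 *t y.2) | x <- sP, y <- sQ] ++ s'); split.
  by rewrite big_cons; apply: outer_decomp_cat => //; apply: outer_decomp_tens.
move=> z; rewrite mem_cat => /orP [/allpairsP [[x y] /= [_ _ ->]] | /rank_s' //].
by rewrite coef_mx_tens (leq_trans (mxrankM_maxl _ _)) ?rank_leq_col.
Qed.

End SchmidtNumber.

Section Subblock.
Variable C : numClosedFieldType.

Definition sel_mx a n (m : 'I_n -> 'I_a) : 'M[C]_(a, n) := \matrix_(i, j) (i == m j)%:R.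

Lemma entry_delta m n (A : 'M[C]_(m, n)) i j :
  A i j = ((delta_mx 0 i : 'rV_m) *m A *m (delta_mx j 0 : 'cV_n)) 0 0.
Proof. by rewrite -rowE -colE !mxE. Qed.

Lemma sel_tens1_delta a b n (m : 'I_n -> 'I_a) j l :
  (sel_mx m *t 1%:M) *m delta_mx (mxtens_index (j, l)) 0
  = delta_mx (mxtens_index (m j, l)) 0 :> 'cV[C]_(a * b).
Proof.
apply/matrixP => u z; rewrite -colE !mxE ord1 eqxx andbT.
case: (mxtens_indexP u) => i k.
by rewrite !mxtens_indexK (can_eq (@mxtens_indexK _ _)) xpair_eqE -natrM mulnb.
Qed.

Lemma subblockE a b n (X : 'M[C]_(a * b)) (m : 'I_n -> 'I_a) :
  subblock X m = adjmx (sel_mx m *t 1%:M) *m X *m (sel_mx m *t 1%:M).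
Proof.
apply/matrixP => u v; case: (mxtens_indexP u) => i k; case: (mxtens_indexP v) => j l.
rewrite mxE !mxtens_indexK [RHS]entry_delta -adjmx_delta -!mulmxA mulmxA -adjmxM.
by rewrite !sel_tens1_delta adjmx_delta mulmxA -entry_delta.
Qed.

Lemma psd_subblock a b n (X : 'M[C]_(a * b)) (m : 'I_n -> 'I_a) :
  psd X -> psd (subblock X m).
Proof. by rewrite subblockE; apply: psd_congr. Qed.

Lemma subblock_comp a b n n' (X : 'M[C]_(a * b)) (m : 'I_n -> 'I_a) (m' : 'I_n' -> 'I_n) :
  subblock (subblock X m) m' = subblock X (m \o m').
Proof. by apply/matrixP => u v; rewrite !mxE !mxtens_indexK. Qed.

Lemma subblock_id a b (X : 'M[C]_(a * b)) : subblock X id = X.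
Proof. by apply/matrixP => u v; rewrite !mxE !mxtens_unindexK. Qed.

Lemma sel_mx_split n :
  sel_mx (@lift n.+1 ord_max) *m adjmx (sel_mx (lift ord_max))
  + sel_mx (fun _ : 'I_1 => ord_max) *m adjmx (sel_mx (fun _ : 'I_1 => ord_max))
  = 1%:M.
Proof.
have max_neq j : (ord_max == lift ord_max j :> 'I_n.+1) = false.
  exact/negbTE/neq_lift.
apply/matrixP => i i'; rewrite !mxE big_ord1 !mxE rmorph_nat.
under eq_bigr => j _ do rewrite !mxE rmorph_nat.
case: (unliftP ord_max i) => [j0 ->|->]; last first.
  by rewrite eqxx mul1r eq_sym big1 ?add0r // => j _; rewrite max_neq mul0r.
rewrite eq_sym max_neq mul0r addr0 (bigD1 j0) //= eqxx mul1r eq_sym.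
rewrite big1 ?addr0 // => j /negbTE j0j.
by rewrite (inj_eq (@lift_inj _ _)) eq_sym j0j mul0r.
Qed.

Lemma sel_tens1_split n b :
  let P := sel_mx (@lift n.+1 ord_max) *t (1%:M : 'M[C]_b) in
  let Q := sel_mx (fun _ : 'I_1 => @ord_max n) *t (1%:M : 'M[C]_b) in
  P *m adjmx P + Q *m adjmx Q = 1%:M.
Proof.
by rewrite /= !adjmx_tens adjmx1 !tensmx_mul mulmx1 -tensmxDl sel_mx_split tens1mx1.
Qed.

End Subblock.

Arguments sel_mx {C a n} m.

Section SchurComplement.
Variables (C : numClosedFieldType) (N N1 N2 : nat).
Variables (Y : 'M[C]_N) (P : 'M[C]_(N, N1)) (Q : 'M[C]_(N, N2)).
Hypothesis PQ1 : P *m adjmx P + Q *m adjmx Q = 1%:M.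

Lemma block_expansion :
  Y = P *m (adjmx P *m Y *m P) *m adjmx P + P *m (adjmx P *m Y *m Q) *m adjmx Q
    + Q *m (adjmx Q *m Y *m P) *m adjmx P + Q *m (adjmx Q *m Y *m Q) *m adjmx Q.
Proof.
rewrite -{1}[Y]mul1mx -{1}[Y]mulmx1 -PQ1 !mulmxDl !mulmxDr ?mulmxDl !mulmxA.
by rewrite !addrA.
Qed.

Lemma schur_decomposition (S : 'M[C]_(N1, N2)) :
  adjmx Y = Y -> adjmx P *m Y *m Q = adjmx P *m Y *m P *m S ->
  Y = (P + Q *m adjmx S) *m (adjmx P *m Y *m P) *m adjmx (P + Q *m adjmx S)
      + Q *m (adjmx (Q - P *m S) *m Y *m (Q - P *m S)) *m adjmx Q.
Proof.
set A := adjmx P *m Y *m P => hermY BE.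
have hermA : adjmx A = A by rewrite !adjmxM adjmxK hermY mulmxA.
have B'E : adjmx Q *m Y *m P = adjmx S *m A.
  by rewrite -hermA -adjmxM -BE !adjmxM adjmxK hermY mulmxA.
have DE : adjmx (Q - P *m S) *m Y *m (Q - P *m S)
          = adjmx Q *m Y *m Q - adjmx S *m A *m S.
  have e1 : adjmx Q *m Y *m P *m S = adjmx S *m A *m S by rewrite B'E.
  have e2 : adjmx S *m adjmx P *m Y *m Q = adjmx S *m A *m S.
    by rewrite -(mulmxA (adjmx S) (adjmx P)) -mulmxA BE !mulmxA.
  have e3 : adjmx S *m adjmx P *m Y *m P *m S = adjmx S *m A *m S.
    by rewrite /A !mulmxA.
  rewrite adjmxB adjmxM !mulmxBl !mulmxBr ?mulmxBl !mulmxA e1 e2 e3.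
  by rewrite subrr subr0.
rewrite DE {1}block_expansion -/A BE B'E adjmxD adjmxM adjmxK.
rewrite !mulmxDl !mulmxDr mulmxN !mulmxDl mulNmx !mulmxA -!addrA.
by congr (_ + (_ + (_ + _))); rewrite addrC subrK.
Qed.

End SchurComplement.

Section Extension.
Variable C : numClosedFieldType.

Lemma SN_coef_le_extend n b (Y : 'M[C]_(n.+1 * b)) r :
  psd Y -> SN_coef_le (subblock Y (@lift n.+1 ord_max)) r -> SN_coef_le Y r.+1.
Proof.
move=> psdY [s [decA rank_s]].
pose P := sel_mx (@lift n.+1 ord_max) *t (1%:M : 'M[C]_b).
pose Q := sel_mx (fun _ : 'I_1 => @ord_max n) *t (1%:M : 'M[C]_b).
rewrite subblockE -/P in decA.
have [S BE] := psd_range P Q psdY.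
have [sD decD] := psd_outer_decomp (psd_congr (Q - P *m S) psdY).
set T := P + Q *m adjmx S.
exists ([seq (x.1, T *m x.2) | x <- s] ++ [seq (x.1, Q *m x.2) | x <- sD]); split.
  rewrite (schur_decomposition (sel_tens1_split _ n b) psdY.1 BE).
  by apply: outer_decomp_cat; apply: outer_decomp_mulmx.
have rankQ (w : 'cV[C]_(1 * b)) : (\rank (coef_mx (Q *m w)) <= 1)%N.
  exact: leq_trans (mxrank_coef_tens_maxl _ _ _) (rank_leq_col _).
move=> x; rewrite mem_cat => /orP [] /mapP [y ys ->] /=; last first.
  exact: leq_trans (rankQ _) _.
rewrite mulmxDl -mulmxA coef_mxD -[r.+1]addn1 (leq_trans (mxrank_add _ _)) //.
by rewrite leq_add ?rankQ // (leq_trans (mxrank_coef_tens_maxr _ _ _)) ?rank_s.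
Qed.

Lemma SN_coef_le_subblocks a b n0 (X : 'M[C]_(a * b)) :
  psd X -> (forall m : 'I_n0 -> 'I_a, injective m -> separable (subblock X m)) ->
  forall j (m : 'I_(j + n0) -> 'I_a), injective m -> SN_coef_le (subblock X m) j.+1.
Proof.
move=> psdX sepX; elim=> [|j IHj] m injm; first exact/separable_SN_coef_le1/sepX.
apply: SN_coef_le_extend; first exact: psd_subblock.
by rewrite subblock_comp; apply/IHj/inj_comp/lift_inj.
Qed.

End Extension.

Theorem theorem18 (R : realType) (d1 d2 k : nat) (X : 'M[R[i]]_(d1 * d2)) :
  (d1 <= d2)%N ->
  psd X ->
  ~ (X = 0) ->
  schmidt_number_is X k ->
  (2 <= k)%N ->
  exists m : 'I_(d1 - k + 2) -> 'I_d1,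
    injective m /\ entangled (subblock X m).
Proof.
move=> _ psdX _ [_ SN_min] k_ge2.
have k_le_d1 : (k <= d1)%N by apply/SN_min/SN_coef_le_SN_le/SN_coef_le_dim.
apply: NNPP => no_entangled.
have sepX (m : 'I_(d1 - k + 2) -> 'I_d1) : injective m -> separable (subblock X m).
  move=> injm; apply: NNPP => not_sep; apply: no_entangled.
  by exists m; split => //; split => //; apply: psd_subblock.
move: (SN_coef_le_subblocks psdX sepX) => /(_ (k - 2)%N).
rewrite (_ : (k - 2 + (d1 - k + 2))%N = d1); last by lia.
move=> /(_ id (@inj_id _)); rewrite subblock_id => /SN_coef_le_SN_le /SN_min.
lia.
Qed.
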